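(* Let $G$ be a graph on $n\ge 3$ vertices, with an edge-colouring using exactly $r$ colours. Let $f:\binom{V(G)}{2}\to\mathbb{Z}_{\ge 0}$ be such that for all distinct $u,v\in V(G)$, there are $f(u,v)$ disjoint monochromatic super-paths connecting $u$ and $v$. Then \[ e(G)\ge\left\lceil\frac{w(f)}{n-2}\right\rceil+r-1. \]
   Context: All graphs are finite, simple and undirected. A super-path is a path of length at least two. Paths are called disjoint if they are internally vertex-disjoint. An edge-coloured path is monochromatic if all its edges have the same colour. For $f:\binom{V(G)}{2}\to\mathbb{Z}_{\ge 0}$ write $f(u,v)=f(\{u,v\})$, and define the weight $w(f)=\sum_{\{u,v\}\in\binom{V(G)}{2}} f(u,v)$. *)

From mathcomp Require Import all_boot.
Set Implicit Arguments. Unset Strict Implicit. Unset Printing Implicit Defensive.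

Definition simple_graph (T : finType) (e : rel T) : Prop :=
  symmetric e /\ irreflexive e.

Definition edge_set (T : finType) (e : rel T) : {set {set T}} :=
  [set p : {set T} | [exists u, exists v, (p == [set u; v]) && e u v]].

Definition num_edges (T : finType) (e : rel T) : nat := #|edge_set e|.

Definition edge_colouring_exactly (T : finType) (e : rel T) (r : nat)
    (c : T -> T -> 'I_r) : Prop :=
  (forall u v, e u v -> c u v = c v u) /\
  (forall k : 'I_r, exists u v, e u v /\ c u v = k).

(* A monochromatic super-path from u to v with interior vertex sequence s:
   the vertex sequence u :: s ++ [:: v] has no repetitions, consecutive
   vertices are adjacent, all edges have the same colour, and the length
   (number of edges = size s + 1) is at least two. *)
Definition mono_superpath (T : finType) (e : rel T) (r : nat)
    (c : T -> T -> 'I_r) (u v : T) (s : seq T) : Prop :=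
  (1 <= size s) /\ uniq (u :: rcons s v) /\
  exists k : 'I_r, path (fun x y => e x y && (c x y == k)) u (rcons s v).

Definition has_disjoint_mono_superpaths (T : finType) (e : rel T) (r : nat)
    (c : T -> T -> 'I_r) (u v : T) (m : nat) : Prop :=
  exists ps : seq (seq T),
    size ps = m /\
    (forall s, s \in ps -> mono_superpath e c u v s) /\
    pairwise (fun s t : seq T => [disjoint s & t]) ps.

Definition weight (T : finType) (f : {set T} -> nat) : nat :=
  \sum_(p : {set T} | #|p| == 2) f p.

(* ceiling division for b > 0 *)
Definition ceil_div (a b : nat) : nat := (a + b.-1) %/ b.

From mathcomp Require Import all_boot zify.
Set Implicit Arguments. Unset Strict Implicit. Unset Printing Implicit Defensive.

(* Double counting over ordered pairs (u, v) of distinct vertices.  The f(u,v)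
   disjoint paths start at distinct neighbours of u and end at distinct
   neighbours of v.  Besides these, N(u) contains the "blocked" neighbours x
   (no monochromatic super-path u x ... v can exist, because the colour of ux
   has no other edge at x or none at v), and every "mixed" common neighbour x
   (ux and xv of different colours, blocked neither way) is missed by the
   first vertices or by the last ones, since a path u x v is monochromatic.
   Hence 2 f(u,v) + b(u,v) + b(v,u) + m(u,v) + 2 [uv in E] <= d(u) + d(v), and
   summing gives 4 w(f) + 2 B + M <= 4 (n - 2) e(G).  Finally
   2 B + M >= 4 (n - 2) (r - 1): a colour class with an isolated vertex or two
   leaves produces 2 (n - 2) blocked triples, while if F colour classes have
   neither, every vertex of degree >= 2 in all of them (all but at most F
   vertices, at most one leaf per class) is a mixed neighbour for at least
   4 F (F - 1) ordered pairs, and F <= n - 1. *)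

Lemma card_sumb (T : finType) (A : {pred T}) : #|A| = \sum_x (x \in A : nat).
Proof. by rewrite -sum1_card big_mkcond. Qed.

Lemma leq_card3 (T : finType) (A B C D : {pred T}) :
  (forall x, (x \in A : nat) + (x \in B : nat) + (x \in C : nat) <= (x \in D : nat)) ->
  #|A| + #|B| + #|C| <= #|D|.
Proof. by move=> le_ABC; rewrite !card_sumb -!big_split; apply: leq_sum. Qed.

Lemma sum_nat_single (I : finType) (a : I) (F : I -> nat) :
  (forall i, i != a -> F i = 0) -> \sum_i F i = F a.
Proof. by move=> F0; rewrite (bigD1 a) //= big1 ?addn0. Qed.

Lemma sum2D (I J : finType) (F G : I -> J -> nat) :
  \sum_i \sum_j (F i j + G i j) = \sum_i \sum_j F i j + \sum_i \sum_j G i j.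
Proof. by rewrite -big_split; apply: eq_bigr => i _; rewrite big_split. Qed.

Lemma sum2Ml (I J : finType) a (F : I -> J -> nat) :
  \sum_i \sum_j (a * F i j) = a * \sum_i \sum_j F i j.
Proof. by rewrite big_distrr; apply: eq_bigr => i _; rewrite big_distrr. Qed.

Lemma sum_distinct_pairs (I : finType) (A : {set I}) :
  \sum_i \sum_j [&& i \in A, j \in A & i != j] = #|A| * (#|A| - 1).
Proof.
rewrite mulnC [X in _ * X]card_sumb big_distrr /=; apply: eq_bigr => i _.
case: (boolP (i \in A)) => [A_i | _]; last by rewrite big1 ?muln0.
rewrite muln1 (cardsD1 i A) A_i add1n subn1 card_sumb.
by apply: eq_bigr => j _; rewrite !inE /= andbC eq_sym.
Qed.

Section OrderedPairs.
Variable T : finType.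
Implicit Types u v x y a b : T.

Lemma set2_eqE x y a b : a != b ->
  ([set x; y] == [set a; b]) = ((x == a) && (y == b)) || ((x == b) && (y == a)).
Proof.
move=> neq_ab; apply/eqP/idP => [E | /orP[] /andP[/eqP-> /eqP->] //]; last first.
  by rewrite setUC.
have xab : x \in [set a; b] by rewrite -E set21.
have yab : y \in [set a; b] by rewrite -E set22.
have axy : a \in [set x; y] by rewrite E set21.
have bxy : b \in [set x; y] by rewrite E set22.
move: xab yab axy bxy; rewrite !inE.
case/orP=> /eqP ? /orP[]/eqP ? /orP[]/eqP ? /orP[]/eqP ?; subst;
  rewrite ?eqxx ?orbT //; by rewrite eqxx in neq_ab.
Qed.

Lemma sum_ordered_pairs (F : {set T} -> nat) :
  \sum_u \sum_v ((u != v) * F [set u; v]) = 2 * \sum_(p : {set T} | #|p| == 2) F p.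
Proof.
rewrite pair_big /= (eq_bigr (fun uv => if uv.1 != uv.2 then F [set uv.1; uv.2] else 0));
  last by move=> uv _; case: (uv.1 != uv.2); rewrite ?mul1n ?mul0n.
rewrite -big_mkcond /= (partition_big (fun uv : T * T => [set uv.1; uv.2])
  (fun p : {set T} => #|p| == 2)) => [|[x y] /= neq_xy]; last by rewrite cards2 neq_xy.
rewrite big_distrr /=; apply: eq_bigr => p /cards2P [a [b [neq_ab ->]]].
rewrite (eq_bigr (fun _ => F [set a; b])) => [|uv /andP[_ /eqP ->] //].
rewrite sum_nat_const; congr (_ * _).
have -> : 2 = #|pred2 (a, b) (b, a)| by rewrite card2 xpair_eqE negb_and neq_ab.
apply: eq_card => -[x y]; rewrite -topredE /= set2_eqE // inE /= !xpair_eqE.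
case: (eqVneq x y) => [<-|//]; apply/esym/negP => /orP[]/andP[/eqP ex /eqP ex'];
  by move: neq_ab; rewrite -ex -ex' eqxx.
Qed.

Lemma sum_neq u : \sum_v (u != v : nat) = #|T| - 1.
Proof. by rewrite subn1 -(cardsC1 u) card_sumb; apply: eq_bigr => v _; rewrite !inE eq_sym. Qed.

Lemma sum_neq2 u x : u != x -> \sum_v ((v != u) && (v != x) : nat) = #|T| - 2.
Proof.
move=> neq_ux; rewrite (eq_bigr (fun v => (v \in ~: [set u; x]) : nat)) => [|v _].
  by rewrite -card_sumb; have := cardsC [set u; x]; rewrite cards2 neq_ux; lia.
by rewrite !inE negb_or.
Qed.

End OrderedPairs.

Lemma head_rev (T : Type) (x : T) s : head x (rev s) = last x s.
Proof. by case/lastP: s => [|s a] //; rewrite rev_rcons last_rcons. Qed.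

Section DisjointSeqs.
Variable T : finType.
Implicit Types s t : seq T.

Lemma pairwise_disjoint_eq (ps : seq (seq T)) s t x :
  pairwise (fun s t : seq T => [disjoint s & t]) ps ->
  s \in ps -> t \in ps -> x \in s -> x \in t -> s = t.
Proof.
elim: ps => [//|a ps IHps] /andP[/allP dis_a dis_ps].
rewrite !inE => /predU1P[-> | ps_s] /predU1P[-> | ps_t] xs xt //.
- by have /disjointFr/(_ xs) := dis_a t ps_t; rewrite xt.
- by have /disjointFr/(_ xt) := dis_a s ps_s; rewrite xs.
- exact: IHps.
Qed.

Lemma pairwise_disjoint_map_uniq (ps : seq (seq T)) (g : seq T -> T) :
  pairwise (fun s t : seq T => [disjoint s & t]) ps ->
  {in ps, forall s, g s \in s} -> uniq (map g ps).
Proof.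
move=> dis_ps g_in; rewrite map_inj_in_uniq => [|s t ps_s ps_t gst].
  elim: ps dis_ps g_in => [//|a ps IHps] /= /andP[/allP dis_a dis_ps] g_in.
  rewrite IHps => [||s ps_s] //; last by apply: g_in; rewrite inE ps_s orbT.
  rewrite andbT; apply/negP => ps_a; have /disjointFr/(_ (g_in a (mem_head _ _))) := dis_a a ps_a.
  by rewrite g_in ?mem_head.
by apply: (pairwise_disjoint_eq dis_ps ps_s ps_t (g_in s ps_s)); rewrite gst g_in.
Qed.

End DisjointSeqs.

Section Graph.
Variables (T : finType) (e : rel T).
Hypotheses (e_sym : symmetric e) (e_irr : irreflexive e).
Implicit Types u v x y : T.

Definition deg x := #|[set y | e x y]|.

Lemma edge_setE u v : u != v -> ([set u; v] \in edge_set e) = e u v.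
Proof.
move=> neq_uv; rewrite inE; apply/existsP/idP => [[a /existsP[b /andP[/eqP E e_ab]]] | e_uv].
  have neq_ab : a != b by apply: contraTneq e_ab => ->; rewrite e_irr.
  move: (eqxx [set u; v]); rewrite {2}E set2_eqE //.
  by case/orP => /andP[/eqP-> /eqP->] //; rewrite e_sym.
by exists u; apply/existsP; exists v; rewrite eqxx e_uv.
Qed.

Lemma degE x : deg x = \sum_y e x y.
Proof. by rewrite /deg card_sumb; apply: eq_bigr => y _; rewrite inE. Qed.

Lemma sum_deg : \sum_u deg u = 2 * num_edges e.
Proof.
transitivity (\sum_u \sum_v ((u != v) * ([set u; v] \in edge_set e))).
  apply: eq_bigr => u _; rewrite degE; apply: eq_bigr => v _.
  by case: (eqVneq u v) => [->|neq_uv]; rewrite ?e_irr // edge_setE ?mul1n.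
rewrite (sum_ordered_pairs (fun p => (p \in edge_set e) : nat)) /num_edges card_sumb.
rewrite [X in _ = 2 * X](bigID (fun p : {set T} => #|p| == 2)) /= [X in _ + X]big1 ?addn0 //.
move=> p not2_p; apply/eqP; rewrite eqb0; apply: contra not2_p.
rewrite inE => /existsP[a /existsP[b /andP[/eqP-> e_ab]]].
by rewrite cards2 eqSS eqb1; apply: contraTneq e_ab => ->; rewrite e_irr.
Qed.

Lemma sum_deg_pairs : \sum_u \sum_v ((u != v) * (deg u + deg v)) = 4 * (#|T| - 1) * num_edges e.
Proof.
under eq_bigr => u _ do under eq_bigr => v _ do rewrite mulnDr.
rewrite sum2D [X in _ + X]exchange_big /=.
have sum_neq_deg u : \sum_v ((u != v) * deg u) = (#|T| - 1) * deg u.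
  by rewrite -big_distrl sum_neq.
under eq_bigr => u _ do rewrite sum_neq_deg.
under [X in _ + X]eq_bigr => u _ do under eq_bigr => v _ do rewrite eq_sym.
under [X in _ + X]eq_bigr => u _ do rewrite sum_neq_deg.
by rewrite -big_distrr /= sum_deg; lia.
Qed.

End Graph.

Section Colouring.
Variables (T : finType) (r : nat) (e : rel T) (c : T -> T -> 'I_r).
Hypotheses (e_sym : symmetric e) (e_irr : irreflexive e).
Hypothesis c_sym : forall u v, e u v -> c u v = c v u.
Implicit Types (u v x y : T) (k : 'I_r).

Definition cdeg k x := #|[set y | e x y && (c x y == k)]|.

Lemma cdegE k x : cdeg k x = \sum_y (e x y * (c x y == k)).
Proof. by rewrite /cdeg card_sumb; apply: eq_bigr => y _; rewrite inE mulnb. Qed.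

Lemma cdegE_sym k x : cdeg k x = \sum_y (e y x * (c y x == k)).
Proof.
rewrite cdegE; apply: eq_bigr => y _; rewrite e_sym.
by case e_yx: (e y x) => //=; rewrite (c_sym e_yx).
Qed.

Lemma cdeg_gt0 k x y : e x y -> c x y = k -> 0 < cdeg k x.
Proof. by move=> e_xy c_xy; apply/card_gt0P; exists y; rewrite inE e_xy c_xy eqxx. Qed.

Lemma cdeg_gt0_sym k x y : e x y -> c x y = k -> 0 < cdeg k y.
Proof. by move=> e_xy c_xy; apply: (@cdeg_gt0 k y x); rewrite 1?e_sym // -c_sym. Qed.

Lemma sum_by_colour x (F : 'I_r -> nat) :
  \sum_y (e x y * F (c x y)) = \sum_k (F k * cdeg k x).
Proof.
under [RHS]eq_bigr => k _ do rewrite cdegE big_distrr.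
rewrite [RHS]exchange_big; apply: eq_bigr => y _ /=.
rewrite (sum_nat_single (a := c x y)) ?eqxx ?muln1 1?mulnC // => k.
by rewrite eq_sym => /negbTE->; rewrite !muln0.
Qed.

Definition blocked u x v := (cdeg (c u x) x == 1) || (cdeg (c u x) v == 0).

Definition blocked_nbrs u v := [set x | e u x && (x != v) && blocked u x v].

Definition mixed_nbrs u v :=
  [set x | [&& e u x, e x v, c u x != c x v, ~~ blocked u x v & ~~ blocked v x u]].

Lemma mono_superpath_rev u v s :
  mono_superpath e c u v s -> mono_superpath e c v u (rev s).
Proof.
case=> s_gt0 [uniq_s [k p_s]]; split; first by rewrite size_rev.
split; first by rewrite -rev_cons -rev_rcons rev_uniq.
exists k; rewrite -rev_path last_rcons belast_rcons rev_cons in p_s.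
apply: sub_path p_s => x y /andP[e_yx /eqP c_yx].
by rewrite e_sym e_yx -(c_sym e_yx) c_yx eqxx.
Qed.

Lemma mono_superpath_head u v s : mono_superpath e c u v s ->
  let x := head u s in [/\ e u x, x != v, x \in s & ~~ blocked u x v].
Proof.
case=> + [+ [k]]; case: s => [//|x s] _ /=.
rewrite mem_head inE negb_or => /and3P[/andP[_ u_sv] x_sv _].
move=> /andP[/andP[e_ux /eqP c_ux] p_xs]; split=> //.
  by apply: contraNneq x_sv => <-; rewrite mem_rcons mem_head.
have := p_xs; rewrite rcons_path => /andP[_ /andP[e_zv /eqP c_zv]].
move: p_xs; rewrite headI /= => /andP[/andP[e_xy /eqP c_xy] _].
have two_nbrs : 1 < cdeg k x.
  have neq_uy : u != head v s by apply: contraNneq u_sv => ->; rewrite headI mem_head.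
  have nbrs_x : [set u; head v s] \subset [set y | e x y && (c x y == k)].
    apply/subsetP => z; rewrite !inE => /orP[]/eqP->; last by rewrite e_xy c_xy eqxx.
    by rewrite e_sym e_ux -(c_sym e_ux) c_ux eqxx.
  by apply: leq_trans (subset_leq_card nbrs_x); rewrite cards2 neq_uy.
by rewrite /blocked c_ux negb_or -lt0n (cdeg_gt0_sym e_zv c_zv) neq_ltn two_nbrs orbT.
Qed.

Lemma mono_superpath_last u v s : mono_superpath e c u v s ->
  let y := last v s in [/\ e v y, y != u, y \in s & ~~ blocked v y u].
Proof.
move/mono_superpath_rev/mono_superpath_head; rewrite /= head_rev => -[? ? ? ?].
by split; rewrite // -mem_rev.
Qed.

Lemma mono_superpath_head_last u v s : mono_superpath e c u v s ->
  head u s = last v s -> c u (head u s) = c (head u s) v.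
Proof.
case=> + [+ [k]]; case: s => [//|x [|y s]] _ /=.
  by move=> _ /and3P[/andP[_ /eqP->] /andP[_ /eqP->] _].
move=> /and4P[_ x_nin _ _] _ x_last.
by move: x_nin; rewrite x_last -rcons_cons mem_rcons inE mem_last orbT.
Qed.

Lemma disjoint_superpaths_bound u v m : u != v ->
  has_disjoint_mono_superpaths e c u v m ->
  2 * m + #|blocked_nbrs u v| + #|blocked_nbrs v u| + #|mixed_nbrs u v| + 2 * e u v
    <= deg e u + deg e v.
Proof.
move=> neq_uv [ps [<- [mono_ps dis_ps]]].
set heads := map (head u) ps; set lasts := map (last v) ps.
have head_in s : s \in ps -> head u s \in s by case/mono_ps/mono_superpath_head.
have last_in s : s \in ps -> last v s \in s by case/mono_ps/mono_superpath_last.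
have card_heads : #|heads| = size ps.
  by rewrite -(size_map (head u)); apply/card_uniqP/pairwise_disjoint_map_uniq.
have card_lasts : #|lasts| = size ps.
  by rewrite -(size_map (last v)); apply/card_uniqP/pairwise_disjoint_map_uniq.
have heads_first x : x \in heads -> [/\ e u x, x != v & ~~ blocked u x v].
  by case/mapP => s /mono_ps/mono_superpath_head[? ? _ ?] ->.
have lasts_last x : x \in lasts -> [/\ e v x, x != u & ~~ blocked v x u].
  by case/mapP => s /mono_ps/mono_superpath_last[? ? _ ?] ->.
have heads_lasts_colour x : x \in heads -> x \in lasts -> c u x = c x v.
  case/mapP => s ps_s -> /mapP[t ps_t st].
  have est : s = t.
    by apply: (pairwise_disjoint_eq dis_ps ps_s ps_t (head_in s ps_s)); rewrite st last_in.
  by subst t; apply: mono_superpath_head_last (mono_ps s ps_s) st.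
set C := mixed_nbrs u v; set heads_set := [set x in heads].
have bound_u : #|heads| + #|blocked_nbrs u v| + #|C :\: heads_set| <= #|[set x | e u x] :\ v|.
  apply: leq_card3 => x; rewrite !inE.
  case: (boolP (x \in heads)) => [/heads_first[-> -> /negbTE->] // | _] /=.
  by case: (eqVneq x v) => [->|_]; case: (e u x) (blocked u x v) => [] [];
    rewrite /= ?eqxx ?e_irr ?andbF ?add0n ?leq_b1.
have bound_v : #|lasts| + #|blocked_nbrs v u| + #|C :&: heads_set| <= #|[set x | e v x] :\ u|.
  apply: leq_card3 => x; rewrite !inE.
  case: (boolP (x \in lasts)) => [lasts_x | _] /=.
    have [-> -> /negbTE->] := lasts_last x lasts_x.
    case: (boolP (x \in heads)) => [heads_x | _]; last by rewrite !andbF.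
    by rewrite (heads_lasts_colour x heads_x lasts_x) eqxx /= !andbF.
  rewrite [e x v]e_sym.
  by case: (eqVneq x u) => [->|_]; case: (e v x) (blocked v x u) => [] [];
    rewrite /= ?eqxx ?e_irr ?andbF ?add0n ?leq_b1.
rewrite card_heads in bound_u; rewrite card_lasts in bound_v.
rewrite /deg (cardsD1 v [set x | e u x]) (cardsD1 u [set x | e v x]) !inE [e v u]e_sym.
rewrite -(cardsID heads_set C); lia.
Qed.

Definition blocked_count := \sum_u \sum_v ((u != v) * #|blocked_nbrs u v|).
Definition mixed_count := \sum_u \sum_v ((u != v) * #|mixed_nbrs u v|).

Lemma weight_bound (f : {set T} -> nat) :
  (forall u v, u != v -> has_disjoint_mono_superpaths e c u v (f [set u; v])) ->
  4 * weight f + 2 * blocked_count + mixed_count <= 4 * (#|T| - 2) * num_edges e.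
Proof.
move=> paths_f.
have blocked_countC : \sum_u \sum_v ((u != v) * #|blocked_nbrs v u|) = blocked_count.
  by rewrite exchange_big; apply: eq_bigr => u _; apply: eq_bigr => v _; rewrite eq_sym.
have sum_adj : \sum_u \sum_v ((u != v) * e u v) = 2 * num_edges e.
  rewrite -(sum_deg e_sym e_irr); apply: eq_bigr => u _; rewrite degE; apply: eq_bigr => v _.
  by case: (eqVneq u v) => [->|]; rewrite ?e_irr /= ?mul1n.
suff: 2 * \sum_u \sum_v ((u != v) * f [set u; v]) + blocked_count +
    \sum_u \sum_v ((u != v) * #|blocked_nbrs v u|) + mixed_count +
    2 * \sum_u \sum_v ((u != v) * e u v)
  <= \sum_u \sum_v ((u != v) * (deg e u + deg e v)).
  by rewrite sum_ordered_pairs (sum_deg_pairs e_sym e_irr) blocked_countC sum_adj -/(weight f); nia.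
rewrite -!sum2Ml -!sum2D; apply: leq_sum => u _; apply: leq_sum => v _.
case: (eqVneq u v) => // neq_uv; rewrite /= !mul1n.
exact: disjoint_superpaths_bound neq_uv (paths_f u v neq_uv).
Qed.

Definition leaves k := [set x | cdeg k x == 1].

Definition full_colours := [set k | [forall x, cdeg k x != 0] && (#|leaves k| <= 1)].

Definition blocked_count_at k :=
  \sum_u \sum_v \sum_x ((u != v) * ((c u x == k) * (x \in blocked_nbrs u v))).

Lemma blocked_countE : blocked_count = \sum_k blocked_count_at k.
Proof.
rewrite /blocked_count_at exchange_big; apply: eq_bigr => u _.
rewrite exchange_big; apply: eq_bigr => v _.
rewrite exchange_big card_sumb big_distrr; apply: eq_bigr => x _ /=.
rewrite -big_distrr -big_distrl /= (sum_nat_single (a := c u x)) ?eqxx ?mul1n // => k.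
by rewrite eq_sym => /negbTE->.
Qed.

Lemma blocked_count_at_leaves k :
  2 <= #|leaves k| -> 2 * (#|T| - 2) <= blocked_count_at k.
Proof.
move=> two_leaves.
apply: leq_trans (_ : \sum_x ((x \in leaves k) * (#|T| - 2)) <= _).
  by rewrite -big_distrl /= -card_sumb leq_mul2r two_leaves orbT.
have -> : \sum_x ((x \in leaves k) * (#|T| - 2)) = \sum_u \sum_v \sum_x
    ((x \in leaves k) * ((e u x * (c u x == k)) * ((v != u) && (v != x)))).
  under [RHS]eq_bigr => u _ do rewrite exchange_big.
  rewrite [RHS]exchange_big; apply: eq_bigr => x _ /=.
  transitivity (\sum_u ((x \in leaves k) * (e u x * (c u x == k)) * (#|T| - 2))).
    rewrite -big_distrl -big_distrr /= -cdegE_sym inE.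
    by case: (eqVneq (cdeg k x) 1) => [->|]; rewrite ?muln1 ?mul0n.
  apply: eq_bigr => u _; rewrite -big_distrr -big_distrr /= mulnA.
  case: (eqVneq u x) => [->|neq_ux]; first by rewrite e_irr !muln0 mul0n.
  by rewrite sum_neq2 // !mulnA.
apply: leq_sum => u _; apply: leq_sum => v _; apply: leq_sum => x _.
rewrite inE; case leaf_x: (cdeg k x == 1); case e_ux: (e u x); case: eqP => //= c_ux.
rewrite inE e_ux /blocked c_ux leaf_x ![v == _]eq_sym.
by case: (u != v); case: (x != v).
Qed.

Lemma blocked_count_at_isolated k :
  #|leaves k| <= 1 -> (exists z, cdeg k z = 0) -> (exists a b, e a b /\ c a b = k) ->
  2 * (#|T| - 2) <= blocked_count_at k.
Proof.
move=> few_leaves [z cdeg_z] [a [b [e_ab c_ab]]].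
set I := [set v | cdeg k v == 0]; set D := \sum_u cdeg k u.
have I_gt0 : 0 < #|I| by apply/card_gt0P; exists z; rewrite inE cdeg_z.
have IC_ge2 : 2 <= #|~: I|.
  have neq_ab : a != b by apply: contraTneq e_ab => ->; rewrite e_irr.
  apply: leq_trans (_ : #|[set a; b]| <= _); first by rewrite cards2 neq_ab.
  apply/subset_leq_card/subsetP => y.
  rewrite !inE -lt0n => /orP[]/eqP->.
  - exact: cdeg_gt0 e_ab c_ab.
  - exact: cdeg_gt0_sym e_ab c_ab.
have IC_D : 2 * #|~: I| <= D + 1.
  apply: leq_trans (_ : D + #|leaves k| <= D + 1); last by rewrite leq_add2l.
  rewrite !card_sumb -big_split big_distrr /=; apply: leq_sum => v _; rewrite !inE.
  by case: (cdeg k v) => [|[|]].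
apply: leq_trans (_ : #|I| * D <= _).
  have := cardsC I; nia.
have -> : #|I| * D = \sum_u \sum_v \sum_x ((v \in I) * (e u x * (c u x == k))).
  rewrite big_distrr; apply: eq_bigr => u _ /=; rewrite card_sumb big_distrl.
  by apply: eq_bigr => v _ /=; rewrite cdegE big_distrr.
apply: leq_sum => u _; apply: leq_sum => v _; apply: leq_sum => x _.
rewrite inE; case: eqP => //= cdeg_v; case e_ux: (e u x); case: eqP => //= c_ux.
have neq_uv : u != v by apply: contraTneq (cdeg_gt0 e_ux c_ux) => ->; rewrite cdeg_v.
have neq_xv : x != v by apply: contraTneq (cdeg_gt0_sym e_ux c_ux) => ->; rewrite cdeg_v.
by rewrite inE e_ux neq_uv neq_xv /blocked c_ux cdeg_v eqxx orbT.
Qed.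

Lemma blocked_count_ge : (forall k, exists a b, e a b /\ c a b = k) ->
  2 * (#|T| - 2) * #|~: full_colours| <= blocked_count.
Proof.
move=> used; rewrite blocked_countE card_sumb big_distrr /=; apply: leq_sum => k _.
rewrite !inE; case: (leqP 2 #|leaves k|) => [two_leaves | /ltnSE few_leaves].
  by rewrite [#|leaves k| <= 1]leqNgt two_leaves andbF muln1 blocked_count_at_leaves.
rewrite few_leaves andbT; case: forallPn => [[z /negPn/eqP cdeg_z] | _]; last by rewrite muln0.
by rewrite muln1 blocked_count_at_isolated //; exists z.
Qed.

Definition good_vertices := [set x | [forall (k | k \in full_colours), 1 < cdeg k x]].

Lemma mixed_at_good x : x \in good_vertices ->
  4 * (#|full_colours| * (#|full_colours| - 1))
    <= \sum_u \sum_v ((u != v) * (x \in mixed_nbrs u v)).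
Proof.
rewrite inE => /forall_inP good_x.
pose full_pair i j := [&& i \in full_colours, j \in full_colours & i != j].
apply: leq_trans (_ : \sum_i \sum_j (full_pair i j * (cdeg i x * cdeg j x)) <= _).
  rewrite -sum_distinct_pairs -sum2Ml; apply: leq_sum => i _; apply: leq_sum => j _.
  rewrite /full_pair; case: (boolP (i \in full_colours)) => //= full_i.
  case: (boolP (j \in full_colours)) => //= full_j; case: (i != j) => //=.
  by have := good_x i full_i; have := good_x j full_j; nia.
have -> : \sum_i \sum_j (full_pair i j * (cdeg i x * cdeg j x))
    = \sum_u (e x u * \sum_v (e x v * full_pair (c x u) (c x v))).
  under [RHS]eq_bigr => u _ do rewrite (sum_by_colour x (full_pair (c x u))).
  rewrite (sum_by_colour x (fun i => \sum_j (full_pair i j * cdeg j x))).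
  apply: eq_bigr => i _.
  by rewrite big_distrl /=; apply: eq_bigr => j _; rewrite mulnCA mulnC.
apply: leq_sum => u _; rewrite big_distrr; apply: leq_sum => v _ /=.
case e_xu: (e x u); case e_xv: (e x v) => //=; rewrite /full_pair.
case: (boolP (c x u \in full_colours)) => //= full_u.
case: (boolP (c x v \in full_colours)) => //= full_v.
case: eqP => //= neq_c; rewrite !mul1n.
have neq_uv : u != v by apply: contra_not_neq neq_c => ->.
have e_ux : e u x by rewrite e_sym.
have not_blocked y z : e x y -> c x y \in full_colours -> ~~ blocked y x z.
  move=> e_xy full_xy; rewrite /blocked -(c_sym e_xy) negb_or neq_ltn good_x // orbT.
  by move: full_xy; rewrite inE => /andP[/forallP-> _].
by rewrite neq_uv inE e_ux e_xv -c_sym // (introN eqP neq_c) !not_blocked.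
Qed.

Lemma card_not_good : #|~: good_vertices| <= #|full_colours|.
Proof.
apply: leq_trans (_ : \sum_x \sum_(k in full_colours) (x \in leaves k) <= _).
  rewrite card_sumb; apply: leq_sum => x _; rewrite !inE.
  case: forall_inPn => [[k full_k] | //]; rewrite -leqNgt => cdeg_le1.
  have pos_k : 0 < cdeg k x by move: full_k; rewrite inE lt0n => /andP[/forallP-> _].
  by rewrite (bigD1 k) //= inE eqn_leq cdeg_le1 pos_k.
rewrite exchange_big /= -sum1_card; apply: leq_sum => k.
by rewrite inE -card_sumb => /andP[].
Qed.

Lemma card_full_colours_le x0 : #|full_colours| <= #|T| - 1.
Proof.
have sub_full : full_colours \subset [set c x0 y | y in [set y | e x0 y]].
  apply/subsetP => k; rewrite inE => /andP[/forallP/(_ x0)] + _.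
  by rewrite -lt0n => /card_gt0P[y]; rewrite inE => /andP[e_y /eqP <-]; apply: imset_f; rewrite inE.
apply: leq_trans (subset_leq_card sub_full) _; apply: leq_trans (leq_imset_card _ _) _.
rewrite subn1 -(cardsC1 x0); apply/subset_leq_card/subsetP => y; rewrite !inE.
by apply: contraTneq => ->; rewrite e_irr.
Qed.

Lemma mixed_count_ge x0 : 2 <= #|full_colours| ->
  4 * (#|T| - 2) * (#|full_colours| - 1) <= mixed_count.
Proof.
move=> two_full; set F := #|full_colours|.
have good_ge : #|T| - F <= #|good_vertices|.
  by have := cardsC good_vertices; have := card_not_good; lia.
have F_le := card_full_colours_le x0.
apply: leq_trans (_ : #|good_vertices| * (4 * (F * (F - 1))) <= _).
  apply: leq_trans (_ : (#|T| - F) * (4 * (F * (F - 1))) <= _); last exact: leq_mul.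
  have -> : #|T| - 2 = (#|T| - F - 1) + (F - 1) by lia.
  have -> : #|T| - F = (#|T| - F - 1) + 1 by lia.
  have -> : F = (F - 1) + 1 by lia.
  nia.
have -> : mixed_count = \sum_x \sum_u \sum_v ((u != v) * (x \in mixed_nbrs u v)).
  rewrite [RHS]exchange_big; apply: eq_bigr => u _; rewrite [RHS]exchange_big.
  by apply: eq_bigr => v _; rewrite card_sumb big_distrr.
rewrite card_sumb big_distrl; apply: leq_sum => x _ /=.
by case: (boolP (x \in good_vertices)) => [/mixed_at_good | _]; rewrite ?mul1n.
Qed.

Lemma blocked_mixed_count_ge x0 : (forall k, exists a b, e a b /\ c a b = k) ->
  4 * (#|T| - 2) * (r - 1) <= 2 * blocked_count + mixed_count.
Proof.
move=> used; have := blocked_count_ge used; have := cardsC full_colours.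
rewrite card_ord; case: (leqP 2 #|full_colours|) => [/(mixed_count_ge x0) | few_full]; nia.
Qed.

End Colouring.

Lemma ceil_div_add_leq a b d m : 0 < d -> a + d * b <= d * m -> ceil_div a d + b <= m.
Proof. by move=> d_gt0 le_m; rewrite /ceil_div addnC -divnMDl // -ltnS ltn_divLR //; nia. Qed.

Theorem theorem2p10 (T : finType) (n r : nat) (e : rel T)
    (c : T -> T -> 'I_r) (f : {set T} -> nat) :
  simple_graph e ->
  #|T| = n -> 3 <= n ->
  edge_colouring_exactly e c ->
  (forall u v : T, u != v ->
     has_disjoint_mono_superpaths e c u v (f [set u; v])) ->
  ceil_div (weight f) (n - 2) + r - 1 <= num_edges e.
Proof.
move=> [e_sym e_irr] card_T n_ge3 [c_sym used] paths_f.
have [x0 _] : exists x0 : T, x0 \in T by apply/card_gt0P; rewrite card_T; apply: ltn_trans n_ge3.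
have r_gt0 : 0 < r := leq_ltn_trans (leq0n _) (ltn_ord (c x0 x0)).
have := weight_bound e_sym e_irr c_sym paths_f.
have := blocked_mixed_count_ge e_sym e_irr c_sym x0 used.
rewrite card_T -addnBA // => le_counts le_weight.
by apply: ceil_div_add_leq; [lia | nia].
Qed.
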